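(* Let $n\ge 1$, $S=\{1,\dots,n\}$, $\Pi=\{P_0,\dots,P_n\}$ and $\mathcal{R}=\{R_{(i,j)}:(i,j)\in S\times S\}$. Let $\mathcal{PN}(n)$ be the class of all (finite or infinite) pointed $(\Pi,\mathcal{R})$-models that are $\mathrm{PN}(n)$-structures. Then $\mathcal{PN}(n)$ is definable by a single first-order $(\Pi,\mathcal{R})$-sentence, and consequently every $(\Pi,\mathcal{R})$-automaton that converges (in particular, every one that halts) in $\mathcal{PN}(n)$ specifies a local algorithm in $\mathcal{PN}(n)$.
   Context: A $(\Pi,\mathcal{R})$-model $M$ consists of a nonempty domain $W$ with $P^M\subseteq W$ for $P\in\Pi$ and $R^M\subseteq W\times W$ for $R\in\mathcal{R}$; a pointed model is $(M,w)$ with $w\in W$. A pointed model $(M,w)$ is a $\mathrm{PN}(n)$-structure if: (1) the union $R$ of all $R_{(i,j)}^M$ is symmetric and irreflexive; (2) for distinct pairs $(i,j)\ne(k,l)$, $R_{(i,j)}^M(u,v)$ implies not $R_{(k,l)}^M(u,v)$; (3) $R_{(i,j)}^M(u,v)$ implies $R_{(j,i)}^M(v,u)$; (4) each $R_{(i,j)}^M$ has out-degree and in-degree at most one at every node; (5) if $R_{(i,j)}^M(u,v)$ and $k<i$, then $R_{(k,l)}^M(u,v')$ for some $l\in S$ and some node $v'$; (6) if $R_{(i,j)}^M(u,v)$ and $k<j$, then $R_{(l,k)}^M(u',v)$ for some $l\in S$ and some node $u'$; (7) for every node $u$ and $i\in\{0,\dots,n\}$, $u\in P_i^M$ iff the out-degree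 of $R$ at $u$ is $i$. A class $\mathcal{H}$ of pointed models is definable by a first-order sentence $\varphi$ if for all pointed models $(M,w)$: $(M,w)\in\mathcal{H}$ iff $M\models\varphi$. A $(\Pi,\mathcal{R})$-automaton, with $\mathcal{R}$ enumerated as $R_1,\dots,R_k$, is a tuple $A=(Q,\mathcal{M},\pi,\delta,\mu,F,G)$ with $Q,\mathcal{M}$ nonempty finite or countably infinite, $\pi:\mathrm{Pow}(\Pi)\to Q$, $\delta:(\mathrm{Pow}(\mathcal{M}))^k\times Q\to Q$, $\mu:Q\times\mathcal{R}\to\mathcal{M}$, $F\subseteq Q$, $G\subseteq Q\setminus F$. On $M$: $f_0(w)=\pi(\{P\in\Pi:w\in P^M\})$, $f_{m+1}(w)=\delta((N_1,\dots,N_k),f_m(w))$ with $N_i=\{\mu(f_m(v),R_i):(w,v)\in R_i^M\}$. $A$ accepts $(M,w)$ in round $m$ if $f_m(w)\in F$ and $f_{m'}(w)\notin G$ for $m'<m$; rejects in round $m$ if $f_m(w)\in G$ and $f_{m'}(w)\notin F$ for $m'<m$. $A$ converges in $\mathcal{K}$ if every $(M,w)\in\mathcal{K}$ is accepted or rejected in some round; $A$ halts in $\mathcal{K}$ if it converges and, once $f_m(w)\in F\cup G$ first occurs, the state stays $f_m(w)$ forever. $A$ specifies a local algorithm in $\mathcal{K}$ if there is $N\in\mathbb{N}$ such that every $(M,w)\in\mathcal{K}$ is accepted or rejected in some round $\le N$. *)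

From mathcomp Require Import all_boot.
From Stdlib Require Import List.
Set Implicit Arguments. Unset Strict Implicit. Unset Printing Implicit Defensive.

(* Signature for parameter n:
   Pi = {P_0,...,P_n}  indexed by 'I_n.+1 (P_i is index i);
   R  = {R_(i,j) : (i,j) in S x S}, S = {1..n}, indexed by 'I_n * 'I_n,
   where ordinal k : 'I_n stands for the element k+1 of S (order preserving). *)
Definition PIdx (n : nat) := 'I_n.+1.
Definition RIdx (n : nat) := ('I_n * 'I_n)%type.

(* A (Pi,R)-model with domain W (nonemptiness is witnessed by the point). *)
Record model (n : nat) (W : Type) := Model {
  Pm : PIdx n -> W -> Prop;
  Rm : RIdx n -> W -> W -> Prop }.

Definition pclass (n : nat) := forall (W : Type), model n W -> W -> Prop.

Inductive formula (n : nat) : Type :=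
| FP   : PIdx n -> nat -> formula n
| FR   : RIdx n -> nat -> nat -> formula n
| FEq  : nat -> nat -> formula n
| FBot : formula n
| FNot : formula n -> formula n
| FAnd : formula n -> formula n -> formula n
| FOr  : formula n -> formula n -> formula n
| FImp : formula n -> formula n -> formula n
| FAll : nat -> formula n -> formula n
| FEx  : nat -> formula n -> formula n.

Fixpoint free (n : nat) (x : nat) (phi : formula n) : Prop :=
  match phi with
  | FP _ y => x = y
  | FR _ y z => x = y \/ x = z
  | FEq y z => x = y \/ x = z
  | FBot => False
  | FNot a => free x a
  | FAnd a b | FOr a b | FImp a b => free x a \/ free x b
  | FAll y a | FEx y a => x <> y /\ free x a
  end.

Definition sentence (n : nat) (phi : formula n) : Prop := forall x, ~ free x phi.

Definition upd (W : Type) (rho : nat -> W) (x : nat) (a : W) : nat -> W :=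
  fun y => if Nat.eqb y x then a else rho y.

Fixpoint sat (n : nat) (W : Type) (M : model n W) (rho : nat -> W) (phi : formula n)
  : Prop :=
  match phi with
  | FP i x => Pm M i (rho x)
  | FR p x y => Rm M p (rho x) (rho y)
  | FEq x y => rho x = rho y
  | FBot => False
  | FNot a => ~ sat M rho a
  | FAnd a b => sat M rho a /\ sat M rho b
  | FOr a b => sat M rho a \/ sat M rho b
  | FImp a b => sat M rho a -> sat M rho b
  | FAll x a => forall d : W, sat M (upd rho x d) a
  | FEx x a => exists d : W, sat M (upd rho x d) a
  end.

Definition models (n : nat) (W : Type) (M : model n W) (phi : formula n) : Prop :=
  forall rho : nat -> W, sat M rho phi.

Definition FO_definable (n : nat) (H : pclass n) : Prop :=
  exists phi : formula n, sentence phi /\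
    forall (W : Type) (M : model n W) (w : W), H W M w <-> models M phi.

Definition Runion (n : nat) (W : Type) (M : model n W) (u v : W) : Prop :=
  exists p : RIdx n, Rm M p u v.

(* the out-degree of the relation Rel at u equals i (possibly infinite degrees
   never equal a natural number) *)
Definition outdeg_is (W : Type) (Rel : W -> W -> Prop) (u : W) (i : nat) : Prop :=
  exists s : list W, List.length s = i /\ List.NoDup s /\
    forall v, Rel u v <-> List.In v s.

Definition PN_structure (n : nat) : pclass n := fun W M _ =>
  (forall u v, Runion M u v -> Runion M v u) /\
  (forall u, ~ Runion M u u) /\
  (forall (p q : RIdx n) u v, p <> q -> Rm M p u v -> ~ Rm M q u v) /\
  (forall (i j : 'I_n) u v, Rm M (i, j) u v -> Rm M (j, i) v u) /\
  (forall (p : RIdx n) u v v', Rm M p u v -> Rm M p u v' -> v = v') /\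
  (forall (p : RIdx n) u u' v, Rm M p u v -> Rm M p u' v -> u = u') /\
  (forall (i j k : 'I_n) u v, Rm M (i, j) u v -> (k < i)%N ->
      exists (l : 'I_n) v', Rm M (k, l) u v') /\
  (forall (i j k : 'I_n) u v, Rm M (i, j) u v -> (k < j)%N ->
      exists (l : 'I_n) u', Rm M (l, k) u' v) /\
  (forall u (i : PIdx n), Pm M i u <-> outdeg_is (Runion M) u i).

(* Pow(X) is represented by predicates X -> Prop; the k-tuple (N_1,...,N_k)
   is a function on the relation index set. *)
Record automaton (n : nat) (Q Msg : Type) := Automaton {
  a_pi    : (PIdx n -> Prop) -> Q;
  a_delta : (RIdx n -> Msg -> Prop) -> Q -> Q;
  a_mu    : Q -> RIdx n -> Msg;
  a_F     : Q -> Prop;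
  a_G     : Q -> Prop;
  a_GF    : forall q, a_G q -> ~ a_F q }.

Fixpoint run (n : nat) (Q Msg : Type) (A : automaton n Q Msg) (W : Type)
  (M : model n W) (m : nat) (w : W) : Q :=
  match m with
  | 0 => a_pi A (fun i => Pm M i w)
  | m'.+1 => a_delta A
      (fun p a => exists v, Rm M p w v /\ a_mu A (run A M m' v) p = a)
      (run A M m' w)
  end.

Definition accepts_in (n : nat) (Q Msg : Type) (A : automaton n Q Msg) (W : Type)
  (M : model n W) (w : W) (m : nat) : Prop :=
  a_F A (run A M m w) /\ forall m', (m' < m)%N -> ~ a_G A (run A M m' w).

Definition rejects_in (n : nat) (Q Msg : Type) (A : automaton n Q Msg) (W : Type)
  (M : model n W) (w : W) (m : nat) : Prop :=
  a_G A (run A M m w) /\ forall m', (m' < m)%N -> ~ a_F A (run A M m' w).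

Definition converges_in (n : nat) (Q Msg : Type) (A : automaton n Q Msg)
  (K : pclass n) : Prop :=
  forall (W : Type) (M : model n W) (w : W), K W M w ->
    exists m, accepts_in A M w m \/ rejects_in A M w m.

Definition halts_in (n : nat) (Q Msg : Type) (A : automaton n Q Msg)
  (K : pclass n) : Prop :=
  converges_in A K /\
  forall (W : Type) (M : model n W) (w : W), K W M w ->
    forall m, (a_F A (run A M m w) \/ a_G A (run A M m w)) ->
      (forall m', (m' < m)%N -> ~ a_F A (run A M m' w) /\ ~ a_G A (run A M m' w)) ->
      forall m'', (m <= m'')%N -> run A M m'' w = run A M m w.

Definition local_algorithm_in (n : nat) (Q Msg : Type) (A : automaton n Q Msg)
  (K : pclass n) : Prop :=
  exists N : nat, forall (W : Type) (M : model n W) (w : W), K W M w ->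
    exists m, (m <= N)%N /\ (accepts_in A M w m \/ rejects_in A M w m).

From mathcomp Require Import all_boot boolp zify.
From Stdlib Require Import Permutation.
Set Implicit Arguments. Unset Strict Implicit. Unset Printing Implicit Defensive.

(* The sentence is the conjunction of the seven axioms; the out-degree axiom becomes a finite
   disjunction over sets of ports, because by disjointness and functionality the out-degree
   of a node is the number of ports it uses.

   For locality, suppose a converging automaton is not local: for every N some
   PN(n)-structure keeps it undecided during the first N rounds.  Its state at a node in
   round m depends only on the depth-m view of the node, i.e. the sets of used ports at the
   ends of all walks of length < m, and there are finitely many such views.  By Koenig's
   lemma there is a coherent sequence of views, each realized by structures that stay
   undecided arbitrarily long.  The non-backtracking walks along the limit form a tree
   which is again a PN(n)-structure.  The automaton decides at its root in some round m,
   yet the tree has the same depth-m view as a structure still undecided in round m. *)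

Lemma InP (T : eqType) (x : T) (s : seq T) : reflect (List.In x s) (x \in s).
Proof.
elim: s => [|y s IH] /=; first by constructor.
rewrite in_cons; apply: (iffP orP) => [[/eqP-> | /IH] | [-> | /IH]];
  by [left | right | rewrite eqxx; left | right].
Qed.

Lemma uniq_NoDup (T : eqType) (s : seq T) : uniq s -> List.NoDup s.
Proof.
elim: s => [|x s IH] /=; first by constructor.
by case/andP=> /InP xs /IH; constructor.
Qed.

Lemma outdeg_is_unique (W : Type) (R : W -> W -> Prop) u i j :
  outdeg_is R u i -> outdeg_is R u j -> i = j.
Proof.
move=> [s [<- [s_uniq sR]]] [t [<- [t_uniq tR]]].
by apply/Permutation_length/NoDup_Permutation => // v; rewrite -sR tR.
Qed.

Section Ports.
Variables (n : nat) (W : Type) (M : model n W).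

Definition ports (x : W) : {set RIdx n} := [set p | `[< exists z, Rm M p x z >]].

Lemma portsP x p : reflect (exists z, Rm M p x z) (p \in ports x).
Proof. by rewrite inE; apply: asboolP. Qed.

Hypothesis ports_disjoint :
  forall (p q : RIdx n) u v, p <> q -> Rm M p u v -> ~ Rm M q u v.
Hypothesis ports_functional :
  forall (p : RIdx n) u v v', Rm M p u v -> Rm M p u v' -> v = v'.

(* One neighbour per used port: distinct by disjointness, exhaustive by functionality. *)
Lemma outdeg_is_card_ports x : outdeg_is (Runion M) x #|ports x|.
Proof.
pose nbr p : W := if pselect (exists z, Rm M p x z) is left h then projT1 (cid h) else x.
have nbrP p : p \in ports x -> Rm M p x (nbr p).
  by move/portsP; rewrite /nbr; case: pselect => // h _; case: cid.
exists (List.map nbr (enum (ports x))); split; first by rewrite List.length_map cardE.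
split.
  apply: List.NoDup_map_NoDup_ForallPairs; last exact/uniq_NoDup/enum_uniq.
  move=> p q /InP; rewrite mem_enum => hp /InP; rewrite mem_enum => hq e.
  apply: contrapT => pq; apply: (ports_disjoint pq (nbrP p hp)).
  by rewrite e; apply: nbrP.
move=> v; split.
  case=> p hp; have pin : p \in ports x by apply/portsP; exists v.
  apply/List.in_map_iff; exists p; split; first exact: ports_functional (nbrP p pin) hp.
  by apply/InP; rewrite mem_enum.
by case/List.in_map_iff=> p [<- /InP]; rewrite mem_enum => /nbrP hp; exists p.
Qed.

Lemma outdeg_is_ports x i : outdeg_is (Runion M) x i <-> #|ports x| = i.
Proof.
split=> [|<-]; last exact: outdeg_is_card_ports.
exact/outdeg_is_unique/outdeg_is_card_ports.
Qed.
End Ports.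

Section PNFacts.
Variables (n : nat) (W : Type) (M : model n W) (w : W).
Hypothesis PN : PN_structure M w.

Lemma PN_disjoint (p q : RIdx n) u v : p <> q -> Rm M p u v -> ~ Rm M q u v.
Proof. by case: PN => _ [_ [h _]]; apply: h. Qed.

Lemma PN_converse (p : RIdx n) u v : Rm M p u v -> Rm M (p.2, p.1) v u.
Proof. by case: PN => _ [_ [_ [h _]]]; case: p => i j; apply: h. Qed.

Lemma PN_functional (p : RIdx n) u v v' : Rm M p u v -> Rm M p u v' -> v = v'.
Proof. by case: PN => _ [_ [_ [_ [h _]]]]; apply: h. Qed.

Lemma PN_row (i j k : 'I_n) u v : Rm M (i, j) u v -> (k < i)%N ->
  exists (l : 'I_n) v', Rm M (k, l) u v'.
Proof. by case: PN => _ [_ [_ [_ [_ [_ [h _]]]]]]; apply: h. Qed.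

Lemma PN_degree u (i : PIdx n) : Pm M i u <-> #|ports M u| = i.
Proof.
case: PN => _ [_ [_ [_ [_ [_ [_ [_ h]]]]]]].
by rewrite h outdeg_is_ports //; [apply: PN_disjoint | apply: PN_functional].
Qed.
End PNFacts.

Section Formulas.
Variable n : nat.
Implicit Types (phi psi : formula n) (k x y : nat).

Definition FTop : formula n := FImp (FBot n) (FBot n).
Definition FIff phi psi := FAnd (FImp phi psi) (FImp psi phi).
Definition FAnds (T : Type) (s : seq T) (f : T -> formula n) : formula n :=
  foldr (fun a acc => FAnd (f a) acc) FTop s.
Definition FOrs (T : Type) (s : seq T) (f : T -> formula n) : formula n :=
  foldr (fun a acc => FOr (f a) acc) (FBot n) s.

Section Sat.
Variables (W : Type) (M : model n W) (rho : nat -> W).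

Lemma sat_FAnd phi psi : sat M rho (FAnd phi psi) <-> sat M rho phi /\ sat M rho psi.
Proof. by []. Qed.

Lemma sat_FNot phi : sat M rho (FNot phi) <-> ~ sat M rho phi.
Proof. by []. Qed.

Lemma sat_FEx x phi : sat M rho (FEx x phi) <-> exists d, sat M (upd rho x d) phi.
Proof. by []. Qed.

Variable T : eqType.

Lemma sat_FAnds (s : seq T) f :
  sat M rho (FAnds s f) <-> forall a, a \in s -> sat M rho (f a).
Proof.
elim: s => [|b s IH] /=; first by [].
rewrite IH; split=> [[hb hs] a | h].
  by rewrite in_cons => /orP[/eqP-> | /hs].
by split=> [|a as_]; apply: h; rewrite in_cons ?eqxx ?as_ ?orbT.
Qed.

Lemma sat_FOrs (s : seq T) f :
  sat M rho (FOrs s f) <-> exists2 a, a \in s & sat M rho (f a).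
Proof.
elim: s => [|b s IH] /=; first by split=> // -[].
rewrite IH; split=> [[hb|[a as_ ha]]|[a]]; first by exists b; rewrite ?in_cons ?eqxx.
  by exists a; rewrite ?in_cons ?as_ ?orbT.
by rewrite in_cons => /orP[/eqP->|as_ ha]; [left|right; exists a].
Qed.
End Sat.

Definition fv_lt k phi := forall x, free x phi -> x < k.

Lemma fv_lt0_sentence phi : fv_lt 0 phi -> sentence phi.
Proof. by move=> h x /h. Qed.

Lemma fv_lt_FP k i x : x < k -> fv_lt k (FP i x). Proof. by move=> ? _ /= ->. Qed.
Lemma fv_lt_FR k p x y : x < k -> y < k -> fv_lt k (FR p x y).
Proof. by move=> ? ? _ /= [] ->. Qed.
Lemma fv_lt_FEq k x y : x < k -> y < k -> fv_lt k (FEq n x y).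
Proof. by move=> ? ? _ /= [] ->. Qed.
Lemma fv_lt_FBot k : fv_lt k (FBot n). Proof. by []. Qed.
Lemma fv_lt_FNot k phi : fv_lt k phi -> fv_lt k (FNot phi). Proof. by []. Qed.
Lemma fv_lt_FAnd k phi psi : fv_lt k phi -> fv_lt k psi -> fv_lt k (FAnd phi psi).
Proof. by move=> h1 h2 x [/h1|/h2]. Qed.
Lemma fv_lt_FOr k phi psi : fv_lt k phi -> fv_lt k psi -> fv_lt k (FOr phi psi).
Proof. by move=> h1 h2 x [/h1|/h2]. Qed.
Lemma fv_lt_FImp k phi psi : fv_lt k phi -> fv_lt k psi -> fv_lt k (FImp phi psi).
Proof. by move=> h1 h2 x [/h1|/h2]. Qed.
Lemma fv_lt_FAll k phi : fv_lt k.+1 phi -> fv_lt k (FAll k phi).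
Proof. by move=> h x /= [xk /h]; rewrite ltnS leq_eqVlt => /orP[/eqP|]. Qed.
Lemma fv_lt_FEx k phi : fv_lt k.+1 phi -> fv_lt k (FEx k phi).
Proof. by move=> h x /= [xk /h]; rewrite ltnS leq_eqVlt => /orP[/eqP|]. Qed.
Lemma fv_lt_FAnds k (T : Type) (s : seq T) f :
  (forall a, fv_lt k (f a)) -> fv_lt k (FAnds s f).
Proof.
by move=> h; elim: s => [|b s IH] x /=; [case|case=> hx; [exact: h b x hx|exact: IH x hx]].
Qed.
Lemma fv_lt_FOrs k (T : Type) (s : seq T) f :
  (forall a, fv_lt k (f a)) -> fv_lt k (FOrs s f).
Proof.
by move=> h; elim: s => [|b s IH] x /=; [case|case=> hx; [exact: h b x hx|exact: IH x hx]].
Qed.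
End Formulas.

Create HintDb fv_lt.
#[export] Hint Resolve fv_lt_FP fv_lt_FR fv_lt_FEq fv_lt_FBot fv_lt_FNot fv_lt_FAnd
  fv_lt_FOr fv_lt_FImp fv_lt_FAll fv_lt_FEx fv_lt_FAnds fv_lt_FOrs : fv_lt.
#[export] Hint Extern 0 (is_true (_ < _)) => done : fv_lt.

Section PNSentence.
Variable n : nat.
Local Notation port := (RIdx n).

Definition FRunion (x y : nat) : formula n := FOrs (enum {: port}) (fun p => FR p x y).
Definition FPort (p : port) : formula n := FEx 1 (FR p 0 1).
Definition FDegree (i : nat) : formula n :=
  FOrs [seq S : {set port} <- enum {: {set port}} | #|S| == i] (fun S =>
    FAnd (FAnds (enum S) FPort) (FAnds (enum (~: S)) (fun p => FNot (FPort p)))).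

Definition ax_symmetric : formula n := FAll 0 (FAll 1 (FImp (FRunion 0 1) (FRunion 1 0))).
Definition ax_irreflexive : formula n := FAll 0 (FNot (FRunion 0 0)).
Definition ax_disjoint : formula n := FAll 0 (FAll 1 (FAnds (enum {: port}) (fun p =>
  FAnds [seq q <- enum {: port} | q != p] (fun q => FImp (FR p 0 1) (FNot (FR q 0 1)))))).
Definition ax_converse : formula n := FAll 0 (FAll 1 (FAnds (enum {: port}) (fun p =>
  FImp (FR p 0 1) (FR (p.2, p.1) 1 0)))).
Definition ax_functional : formula n := FAll 0 (FAll 1 (FAll 2 (FAnds (enum {: port}) (fun p =>
  FImp (FR p 0 1) (FImp (FR p 0 2) (FEq n 1 2)))))).
Definition ax_injective : formula n := FAll 0 (FAll 1 (FAll 2 (FAnds (enum {: port}) (fun p =>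
  FImp (FR p 0 2) (FImp (FR p 1 2) (FEq n 0 1)))))).
Definition ax_row : formula n := FAll 0 (FAll 1 (FAnds (enum {: port}) (fun p =>
  FAnds [seq k : 'I_n <- enum 'I_n | k < p.1] (fun k =>
    FImp (FR p 0 1) (FEx 2 (FOrs (enum 'I_n) (fun l => FR (k, l) 0 2))))))).
Definition ax_column : formula n := FAll 0 (FAll 1 (FAnds (enum {: port}) (fun p =>
  FAnds [seq k : 'I_n <- enum 'I_n | k < p.2] (fun k =>
    FImp (FR p 0 1) (FEx 2 (FOrs (enum 'I_n) (fun l => FR (l, k) 2 1))))))).
Definition ax_degree : formula n :=
  FAll 0 (FAnds (enum {: PIdx n}) (fun i => FIff (FP i 0) (FDegree i))).

Definition PN_sentence : formula n :=
  FAnd ax_symmetric (FAnd ax_irreflexive (FAnd ax_disjoint (FAnd ax_converse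
  (FAnd ax_functional (FAnd ax_injective (FAnd ax_row (FAnd ax_column ax_degree))))))).

Lemma PN_sentence_closed : sentence PN_sentence.
Proof.
apply: fv_lt0_sentence; rewrite /PN_sentence /ax_symmetric /ax_irreflexive /ax_disjoint.
rewrite /ax_converse /ax_functional /ax_injective /ax_row /ax_column /ax_degree.
rewrite /FRunion /FDegree /FPort /FIff.
by auto 20 with fv_lt.
Qed.

Section Semantics.
Variables (W : Type) (M : model n W).
Implicit Type rho : nat -> W.

Lemma sat_FRunion x y rho : sat M rho (FRunion x y) <-> Runion M (rho x) (rho y).
Proof.
by rewrite sat_FOrs; split=> [[p _ h]|[p h]]; [exists p | exists p; rewrite ?mem_enum].
Qed.

Lemma sat_ax_symmetric rho :
  sat M rho ax_symmetric <-> forall u v, Runion M u v -> Runion M v u.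
Proof. by rewrite /ax_symmetric /=; split=> h u v; move: (h u v); rewrite !sat_FRunion. Qed.

Lemma sat_ax_irreflexive rho : sat M rho ax_irreflexive <-> forall u, ~ Runion M u u.
Proof. by rewrite /ax_irreflexive /=; split=> h u; move: (h u); rewrite sat_FRunion. Qed.

Lemma sat_ax_disjoint rho : sat M rho ax_disjoint <->
  forall (p q : port) u v, p <> q -> Rm M p u v -> ~ Rm M q u v.
Proof.
rewrite /ax_disjoint /=.
split=> h.
  move=> p q u v /eqP qp; move: (h u v); rewrite sat_FAnds => /(_ p (mem_enum _ _)).
  by rewrite sat_FAnds => /(_ q); rewrite mem_filter eq_sym qp mem_enum; apply.
move=> u v; apply/sat_FAnds => p _; apply/sat_FAnds => q; rewrite mem_filter => /andP[qp _].
by apply: h; apply/eqP; rewrite eq_sym.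
Qed.

Lemma sat_ax_converse rho : sat M rho ax_converse <->
  forall (i j : 'I_n) u v, Rm M (i, j) u v -> Rm M (j, i) v u.
Proof.
rewrite /ax_converse /=.
split=> [h i j u v | h u v]; last by apply/sat_FAnds => -[i j] _; apply: h.
by move: (h u v); rewrite sat_FAnds => /(_ (i, j) (mem_enum _ _)).
Qed.

Lemma sat_ax_functional rho : sat M rho ax_functional <->
  forall (p : port) u v v', Rm M p u v -> Rm M p u v' -> v = v'.
Proof.
rewrite /ax_functional /=.
split=> [h p u v v' | h u v v']; last by apply/sat_FAnds => p _; apply: h.
by move: (h u v v'); rewrite sat_FAnds => /(_ p (mem_enum _ _)).
Qed.

Lemma sat_ax_injective rho : sat M rho ax_injective <->
  forall (p : port) u u' v, Rm M p u v -> Rm M p u' v -> u = u'.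
Proof.
rewrite /ax_injective /=.
split=> [h p u u' v | h u u' v]; last by apply/sat_FAnds => p _; apply: h.
by move: (h u u' v); rewrite sat_FAnds => /(_ p (mem_enum _ _)).
Qed.

Lemma sat_ax_row rho : sat M rho ax_row <-> forall (i j k : 'I_n) u v,
  Rm M (i, j) u v -> k < i -> exists (l : 'I_n) v', Rm M (k, l) u v'.
Proof.
rewrite /ax_row /=.
split=> h.
  move=> i j k u v r ki; move: (h u v); rewrite sat_FAnds => /(_ (i, j) (mem_enum _ _)).
  rewrite sat_FAnds => /(_ k); rewrite mem_filter ki mem_enum => /(_ erefl r).
  by case/sat_FEx=> v' /sat_FOrs [l _ r']; exists l, v'.
move=> u v; apply/sat_FAnds => -[i j] _; apply/sat_FAnds => k; rewrite mem_filter.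
case/andP=> ki _ r; have [l [v' r']] := h i j k u v r ki.
by apply/sat_FEx; exists v'; apply/sat_FOrs; exists l; rewrite ?mem_enum.
Qed.

Lemma sat_ax_column rho : sat M rho ax_column <-> forall (i j k : 'I_n) u v,
  Rm M (i, j) u v -> k < j -> exists (l : 'I_n) u', Rm M (l, k) u' v.
Proof.
rewrite /ax_column /=.
split=> h.
  move=> i j k u v r kj; move: (h u v); rewrite sat_FAnds => /(_ (i, j) (mem_enum _ _)).
  rewrite sat_FAnds => /(_ k); rewrite mem_filter kj mem_enum => /(_ erefl r).
  by case/sat_FEx=> u' /sat_FOrs [l _ r']; exists l, u'.
move=> u v; apply/sat_FAnds => -[i j] _; apply/sat_FAnds => k; rewrite mem_filter.
case/andP=> kj _ r; have [l [u' r']] := h i j k u v r kj.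
by apply/sat_FEx; exists u'; apply/sat_FOrs; exists l; rewrite ?mem_enum.
Qed.

Lemma sat_FPort rho p : sat M rho (FPort p) <-> p \in ports M (rho 0).
Proof. by split=> [[z hz] | /portsP [z hz]]; [apply/portsP; exists z | exists z]. Qed.

Lemma sat_FDegree rho (i : nat) : sat M rho (FDegree i) <-> #|ports M (rho 0)| = i.
Proof.
rewrite sat_FOrs; split=> [[S] | <-].
  rewrite mem_filter => /andP[/eqP <- _] [/sat_FAnds inS /sat_FAnds notS].
  congr #|pred_of_set _|; apply/setP => p; apply/idP/idP => [pu | pS].
    apply: contraT => pS; have := notS p; rewrite mem_enum in_setC sat_FNot sat_FPort.
    by move/(_ pS)/(_ pu).
  by apply/sat_FPort/inS; rewrite mem_enum.
exists (ports M (rho 0)); first by rewrite mem_filter eqxx mem_enum.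
split; apply/sat_FAnds => p; rewrite mem_enum ?in_setC => hp; first exact/sat_FPort.
by rewrite sat_FNot sat_FPort; apply/negP.
Qed.

Lemma sat_ax_degree rho : sat M rho ax_degree <->
  forall u (i : PIdx n), Pm M i u <-> #|ports M u| = i.
Proof.
rewrite /ax_degree /=; split=> h u.
  move=> i; have := h u; rewrite sat_FAnds => /(_ i (mem_enum _ _)) [hl hr].
  split=> [/hl /sat_FDegree // | hc]; apply: hr; exact/sat_FDegree.
apply/sat_FAnds => i _; split; first by move=> hP; apply/sat_FDegree/h.
by move=> /sat_FDegree /h.
Qed.

Lemma sat_PN_sentence rho : sat M rho PN_sentence <-> PN_structure M (rho 0).
Proof.
rewrite /PN_sentence !sat_FAnd sat_ax_symmetric sat_ax_irreflexive sat_ax_disjoint.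
rewrite sat_ax_converse sat_ax_functional sat_ax_injective sat_ax_row sat_ax_column.
rewrite sat_ax_degree.
split=> -[h1 [h1' [h2 [h3 [h4 [h4' [h5 [h6 h7]]]]]]]]; do 8! split=> //;
  by move=> u i; rewrite h7 (outdeg_is_ports h2 h4).
Qed.
End Semantics.
End PNSentence.

Lemma PN_FO_definable n : FO_definable (@PN_structure n).
Proof.
exists (PN_sentence n); split; first exact: PN_sentence_closed.
move=> W M w; split=> [PN rho | /(_ (fun _ => w)) /sat_PN_sentence //].
exact/sat_PN_sentence.
Qed.

Section PortBisimulation.
Variable n : nat.

Fixpoint port_bisim m W1 (M1 : model n W1) W2 (M2 : model n W2) (x1 : W1) (x2 : W2)
  : Prop :=
  ports M1 x1 = ports M2 x2 /\
  if m is m'.+1 then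
    forall p y1 y2, Rm M1 p x1 y1 -> Rm M2 p x2 y2 -> port_bisim m' M1 M2 y1 y2
  else True.

Lemma port_bisimS m W1 (M1 : model n W1) W2 (M2 : model n W2) x1 x2 :
  port_bisim m.+1 M1 M2 x1 x2 -> port_bisim m M1 M2 x1 x2.
Proof.
elim: m x1 x2 => [|m IH] x1 x2 /= [eq_ports nbrs]; split=> // p y1 y2 r1 r2.
exact/IH/(nbrs p y1 y2 r1 r2).
Qed.

Variables (Q Msg : Type) (A : automaton n Q Msg).

(* In a PN(n)-structure the labels of a node are determined by its set of ports. *)
Lemma run_port_bisim m W1 (M1 : model n W1) w1 W2 (M2 : model n W2) w2 x1 x2 :
  PN_structure M1 w1 -> PN_structure M2 w2 ->
  port_bisim m M1 M2 x1 x2 -> run A M1 m x1 = run A M2 m x2.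
Proof.
move=> PN1 PN2; elim: m x1 x2 => [|m IH] x1 x2 bisim /=.
  congr (a_pi A _); apply/funext => i; apply/propext.
  by rewrite (PN_degree PN1) (PN_degree PN2) bisim.1.
rewrite (IH x1 x2 (port_bisimS bisim)); congr (a_delta A _ _).
apply/funext => p; apply/funext => a; apply/propext; case: bisim => eq_ports nbrs.
split=> -[y [r <-]].
  have /portsP [y' r'] : p \in ports M2 x2 by rewrite -eq_ports; apply/portsP; exists y.
  by exists y'; split=> //; rewrite (IH y y') //; exact: nbrs r r'.
have /portsP [y' r'] : p \in ports M1 x1 by rewrite eq_ports; apply/portsP; exists y.
by exists y'; split=> //; rewrite (IH y' y) //; exact: nbrs r' r.
Qed.
End PortBisimulation.

Lemma antitone_pigeonhole (T : eqType) (s : seq T) (P : T -> nat -> Prop) :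
  (forall t N N', N' <= N -> P t N -> P t N') ->
  (forall N, exists2 t, t \in s & P t N) -> exists t, forall N, P t N.
Proof.
move=> antitone cover; apply: contrapT => none.
have fails t : exists N, ~ P t N by apply/existsNP => allN; apply: none; exists t.
have [N hN] : exists N, forall t, t \in s -> ~ P t N.
  elim: s {cover} => [|t s [N hN]]; first by exists 0.
  have [Nt hNt] := fails t.
  exists (maxn Nt N) => t'; rewrite in_cons => /orP[/eqP-> | t's] Pt'.
    by apply: hNt; apply: antitone Pt'; apply: leq_maxl.
  by apply: (hN t' t's); apply: antitone Pt'; apply: leq_maxr.
by have [t ts Pt] := cover N; exact: hN t ts Pt.
Qed.

Section Walks.
Variable n : nat.
Local Notation port := (RIdx n).

Definition flip (p : port) : port := (p.2, p.1).

Lemma flipK : involutive flip. Proof. by case. Qed.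

(* Words are read right to left: [p :: u] continues the walk [u] along port [p]. *)
Inductive walk W (M : model n W) (x : W) : seq port -> W -> Prop :=
| walk_nil : walk M x [::] x
| walk_cons u y p z : walk M x u y -> Rm M p y z -> walk M x (p :: u) z.

Definition walk_ports W (M : model n W) (x : W) (u : seq port) : {set port} :=
  [set p | `[< exists2 y, walk M x u y & p \in ports M y >]].

Lemma walk_functional W (M : model n W) w x u y y' : PN_structure M w ->
  walk M x u y -> walk M x u y' -> y = y'.
Proof.
move=> PN wy; elim: wy y' => [|u1 y1 p z _ IH r] y' wy'; first by inversion wy'.
inversion wy' as [|u2 y2 p2 z2 wy2 r2]; subst.
rewrite (IH _ wy2) in r; exact: (PN_functional PN r r2).
Qed.

Lemma walk_portsE W (M : model n W) w x u y : PN_structure M w ->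
  walk M x u y -> walk_ports M x u = ports M y.
Proof.
move=> PN wy; apply/setP => p; rewrite [in LHS]inE.
apply/asboolP/idP => [[y' wy' py'] | py].
  by rewrite (walk_functional PN wy wy').
by exists y.
Qed.

Fixpoint words m : seq (seq port) :=
  if m is m'.+1 then [::] :: [seq p :: u | p <- enum {: port}, u <- words m'] else [::].

Lemma mem_words m u : (u \in words m) = (size u < m).
Proof.
elim: m u => [|m IH] [|p u] //=; rewrite in_cons /=.
apply/allpairsP/idP => [[[q u'] /= [_ hu' [_ ->]]] | hu]; first by rewrite ltnS -IH.
by exists (p, u); rewrite mem_enum IH.
Qed.

Definition view m (t : seq port -> {set port}) : seq {set port} := map t (words m).

Lemma view_eqP m t1 t2 : view m t1 = view m t2 <-> {in [pred u | size u < m], t1 =1 t2}.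
Proof.
split=> [/eq_in_map eq_t u hu | eq_t]; first by apply: eq_t; rewrite mem_words.
by apply/eq_in_map => u; rewrite mem_words; apply: eq_t.
Qed.

Lemma view_succ m t1 t2 : view m.+1 t1 = view m.+1 t2 -> view m t1 = view m t2.
Proof. by move/view_eqP=> eq_t; apply/view_eqP => u hu; apply: eq_t; apply: ltnW. Qed.

Definition all_views m : seq (seq {set port}) :=
  map val (enum {: (size (words m)).-tuple {set port}}).

Lemma view_in_all_views m t : view m t \in all_views m.
Proof.
have size_view : size (view m t) == size (words m) by rewrite size_map.
by rewrite (_ : view m t = val (Tuple size_view)) // map_f ?mem_enum.
Qed.
End Walks.
Arguments flipK {n}.

Section Compactness.
Variables (n : nat) (Q Msg : Type) (A : automaton n Q Msg).
Local Notation port := (RIdx n).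

Definition undecided N W (M : model n W) x :=
  forall m, m <= N -> ~ a_F A (run A M m x) /\ ~ a_G A (run A M m x).

Lemma undecided_le N N' W (M : model n W) x :
  N' <= N -> undecided N M x -> undecided N' M x.
Proof. by move=> le und m mN'; apply: und; apply: leq_trans le. Qed.

Lemma decided_within N W (M : model n W) x : ~ undecided N M x ->
  exists2 m, m <= N & accepts_in A M x m \/ rejects_in A M x m.
Proof.
move=> /existsNP [m0 /not_implyP [m0N /not_andP FG0]].
have ex : exists m, `[< m <= N /\ (a_F A (run A M m x) \/ a_G A (run A M m x)) >].
  by exists m0; apply/asboolP; split=> //; case: FG0 => /contrapT; [left | right].
case: (ex_minnP ex) => m /asboolP [mN FG] minm; exists m => //.
have early m' : m' < m -> ~ a_F A (run A M m' x) /\ ~ a_G A (run A M m' x).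
  move=> lt; apply/not_orP => FG'; suff : m <= m' by rewrite leqNgt lt.
  by apply: minm; apply/asboolP; split=> //; apply: leq_trans (ltnW lt) mN.
by case: FG => h; [left | right]; split=> // m' /early [].
Qed.

Definition realizable m (s : seq {set port}) := forall N, exists W (M : model n W) x,
  [/\ PN_structure M x, undecided N M x & view m (walk_ports M x) = s].

Lemma realizable_extend m s : realizable m s ->
  exists2 s', realizable m.+1 s' & forall t, view m.+1 t = s' -> view m t = s.
Proof.
move=> real.
pose P s' N := exists W (M : model n W) x, [/\ PN_structure M x, undecided N M x,
  view m.+1 (walk_ports M x) = s' & view m (walk_ports M x) = s].
have [s' Ps'] : exists s', forall N, P s' N.
  apply: (@antitone_pigeonhole _ (all_views n m.+1)).
    move=> s'' N N' le [W [M [x [PN und vs' vs]]]].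
    by exists W, M, x; split=> //; apply: undecided_le und.
  move=> N; have [W [M [x [PN und vs]]]] := real N.
  by exists (view m.+1 (walk_ports M x)); [apply: view_in_all_views | exists W, M, x].
exists s' => [N | t ts'].
  by have [W [M [x [PN und vs' _]]]] := Ps' N; exists W, M, x.
have [W [M [x [_ _ vs' <-]]]] := Ps' 0.
by apply: view_succ; rewrite ts' vs'.
Qed.

Section Limit.
Hypothesis unbounded : forall N, exists W (M : model n W) x,
  PN_structure M x /\ undecided N M x.

Lemma realizable0 : realizable 0 [::].
Proof. by move=> N; have [W [M [x [PN und]]]] := unbounded N; exists W, M, x. Qed.

(* Koenig's lemma: a branch through the finitely branching tree of realizable views. *)
Fixpoint branch m : {s | realizable m s} :=
  if m is m'.+1 then
    let e := cid2 (realizable_extend (svalP (branch m'))) in exist _ (s2val e) (s2valP e)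
  else exist _ [::] realizable0.

Lemma branch_restrict m k t :
  k <= m -> view m t = sval (branch m) -> view k t = sval (branch k).
Proof.
elim: m => [|m IH]; first by rewrite leqn0 => /eqP->.
rewrite leq_eqVlt => /orP[/eqP-> // | km] vt; apply: IH => //.
by move: vt; rewrite /=; case: cid2 => s' _ /= ext; apply: ext.
Qed.

Definition lim_ports (u : seq port) : {set port} :=
  nth set0 (sval (branch (size u).+1)) (index u (words n (size u).+1)).

Lemma realizable_lim m N : exists W (M : model n W) x, [/\ PN_structure M x,
  undecided N M x & forall u, size u < m -> walk_ports M x u = lim_ports u].
Proof.
have [W [M [x [PN und vs]]]] := svalP (branch m) N.
exists W, M, x; split=> // u hu.
rewrite /lim_ports -(branch_restrict hu vs) /view (nth_map [::]) ?nth_index //.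
  by rewrite mem_words.
by rewrite index_mem mem_words.
Qed.

(* Non-backtracking words along the limit port assignment are the nodes of its unfolding tree. *)
Fixpoint valid (u : seq port) : bool :=
  if u is p :: u' then [&& valid u', p \in lim_ports u' & ohead u' != Some (flip p)]
  else true.

Lemma valid_walk m W (M : model n W) x : PN_structure M x ->
  (forall u, size u < m -> walk_ports M x u = lim_ports u) ->
  forall u, valid u -> size u < m -> exists y, walk M x u y.
Proof.
move=> PN lim; elim=> [|p u IH] /=; first by exists x; constructor.
case/and3P=> vu pu _ hs; have [y wy] := IH vu (ltnW hs).
rewrite -lim ?(ltnW hs) // (walk_portsE PN wy) in pu.
by case/portsP: pu => z r; exists z; apply: walk_cons wy r.
Qed.

Lemma lim_ports_realized u : valid u -> exists W (M : model n W) x y,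
  [/\ PN_structure M x, walk M x u y & lim_ports u = ports M y].
Proof.
move=> vu; have [W [M [x [PN _ lim]]]] := realizable_lim (size u).+1 0.
have [y wy] := valid_walk PN lim vu (ltnSn _).
by exists W, M, x, y; split=> //; rewrite -lim // (walk_portsE PN wy).
Qed.

Lemma lim_ports_row u (i j k : 'I_n) : valid u -> (i, j) \in lim_ports u -> k < i ->
  exists l, (k, l) \in lim_ports u.
Proof.
case/lim_ports_realized=> W [M [x [y [PN _ ->]]]] /portsP [z r] ki.
by have [l [v' r']] := PN_row PN r ki; exists l; apply/portsP; exists v'.
Qed.

Lemma lim_ports_back p u : valid (p :: u) -> flip p \in lim_ports (p :: u).
Proof.
case/lim_ports_realized=> W [M [x [y [PN wy ->]]]].
inversion wy as [|u' y' p' z wy' r]; subst.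
by apply/portsP; exists y'; exact: (PN_converse PN r).
Qed.

Definition tree_edge (p : port) (u v : seq port) : bool :=
  [&& valid u, valid v & (v == p :: u) || (u == flip p :: v)].

(* The labels are defined by the out-degree, so axiom (7) holds by construction. *)
Definition tree_model : model n (seq port) :=
  Model (fun i u => outdeg_is (fun u v => exists p, tree_edge p u v) u i) tree_edge.

Lemma tree_edge_flip p u v : tree_edge p u v -> tree_edge (flip p) v u.
Proof. by case/and3P=> vu vv e; rewrite /tree_edge vu vv flipK orbC. Qed.

Lemma tree_ports u : valid u -> ports tree_model u = lim_ports u.
Proof.
move=> vu; apply/setP => p.
apply/portsP/idP => [[v /and3P[_ vv /orP[/eqP e | /eqP e]]] | pu].
- by move: vv; rewrite e /= => /and3P[].
- by have := lim_ports_back (p := flip p) (u := v); rewrite flipK -e; apply.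
case back: (ohead u == Some (flip p)).
  case: u vu back pu => // q u vu /eqP [eq_q] _; subst q; exists u.
  by case/and3P: (vu) => vu' _ _; apply/and3P; split=> //; rewrite eqxx orbT.
by exists (p :: u); apply/and3P; split; rewrite /= ?vu ?pu ?back ?eqxx.
Qed.

Lemma tree_irreflexive p u : ~ tree_edge p u u.
Proof. by case/and3P=> _ _ /orP[] /eqP /(congr1 size) /=; lia. Qed.

Lemma tree_disjoint p q u v : tree_edge p u v -> tree_edge q u v -> p = q.
Proof.
case/and3P=> _ _ /orP[]/eqP-> /and3P[_ _ /orP[]/eqP].
- by case.
- by move/(congr1 size) => /=; lia.
- by move/(congr1 size) => /=; lia.
- by case: p q => [p1 p2] [q1 q2] [-> ->].
Qed.

Lemma tree_functional p u v v' : tree_edge p u v -> tree_edge p u v' -> v = v'.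
Proof.
case/and3P=> _ vv /orP[]/eqP ev /and3P[_ vv' /orP[]/eqP ev'].
- by rewrite ev ev'.
- by move: vv; rewrite ev ev' /= eqxx !andbF.
- by move: vv'; rewrite ev' ev /= eqxx !andbF.
- by move: ev'; rewrite ev => -[].
Qed.

Lemma tree_row (i j k : 'I_n) u v : tree_edge (i, j) u v -> k < i ->
  exists (l : 'I_n) v', tree_edge (k, l) u v'.
Proof.
move=> e ki; have vu : valid u by case/and3P: e.
have ij : (i, j) \in lim_ports u by rewrite -tree_ports //; apply/portsP; exists v.
have [l] := lim_ports_row vu ij ki; rewrite -tree_ports // => /portsP [v' e'].
by exists l, v'.
Qed.

Lemma tree_PN : PN_structure tree_model [::].
Proof.
split; first by move=> u v [p /tree_edge_flip e]; exists (flip p).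
split; first by move=> u [p /tree_irreflexive].
split; first by move=> p q u v pq e e'; apply/pq/(tree_disjoint e e').
split; first by move=> i j u v /tree_edge_flip.
split; first exact: tree_functional.
split.
  by move=> p u u' v /tree_edge_flip e /tree_edge_flip e'; apply: tree_functional e e'.
split; first exact: tree_row.
split; last by move=> u i; split.
move=> i j k u v /tree_edge_flip e kj; have [l [u' e']] := tree_row e kj.
by exists l, u'; apply: (tree_edge_flip e').
Qed.

Lemma tree_port_bisim m W (M : model n W) x : PN_structure M x ->
  (forall u, size u < m -> walk_ports M x u = lim_ports u) ->
  forall k u y, valid u -> walk M x u y -> size u + k < m -> port_bisim k tree_model M u y.
Proof.
move=> PN lim; elim=> [|k IH] u y vu wy hs; split.
- by rewrite tree_ports // -lim ?(walk_portsE PN wy) //; lia.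
- by [].
- by rewrite tree_ports // -lim ?(walk_portsE PN wy) //; lia.
move=> p v z /and3P[_ vv /orP[/eqP ev | /eqP eu]] r.
  by subst v; apply: IH => //=; [exact: walk_cons wy r | lia].
subst u; inversion wy as [|u' y' p' z' wy' r']; subst.
have -> : z = y'.
  by apply: (PN_functional PN r); rewrite -[p]flipK; exact: (PN_converse PN r').
by apply: IH => //; move: hs => /=; lia.
Qed.
End Limit.
End Compactness.

Lemma converges_local n (Q Msg : Type) (A : automaton n Q Msg) :
  converges_in A (@PN_structure n) -> local_algorithm_in A (@PN_structure n).
Proof.
move=> conv; apply: contrapT => nonlocal.
have unbounded N : exists W (M : model n W) x, PN_structure M x /\ undecided A N M x.
  apply: contrapT => none; apply: nonlocal; exists N => W M x PN.
  have [m mN dec] : exists2 m, m <= N & accepts_in A M x m \/ rejects_in A M x m.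
    by apply: decided_within => und; apply: none; exists W, M, x.
  by exists m.
have [m acc_rej] := conv _ _ _ (tree_PN unbounded).
have [W [M [x [PN und lim]]]] := realizable_lim unbounded m.+1 m.
have bisim : port_bisim m (tree_model unbounded) M [::] x.
  by apply: (tree_port_bisim PN lim) => //; constructor.
have [notF notG] := und m (leqnn m).
rewrite -(run_port_bisim A (tree_PN unbounded) PN bisim) in notF notG.
by case: acc_rej => -[].
Qed.

Theorem mainTheorem5 (n : nat) (hn : (1 <= n)%N) :
  FO_definable (@PN_structure n) /\
  (forall (Q Msg : countType) (A : automaton n Q Msg),
      converges_in A (@PN_structure n) -> local_algorithm_in A (@PN_structure n)) /\
  (forall (Q Msg : countType) (A : automaton n Q Msg),
      halts_in A (@PN_structure n) -> local_algorithm_in A (@PN_structure n)).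
Proof.
split; first exact: PN_FO_definable.
by split=> Q Msg A; [apply: converges_local | case=> conv _; apply: converges_local].
Qed.
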